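(* For any integers $n\ge k\ge1$, $$w(n,k)=\sum_{j=1}^k\binom{n-j}{k-j}N(n,j)\quad\text{and}\quad N(n,k)=\sum_{j=1}^k\binom{n-j}{k-j}(-1)^{k-j}w(n,j).$$
   Context: For $n\ge k\ge1$, $N(n,k)=\frac1n\binom{n}{k}\binom{n}{k-1}$ (Narayana number) and $w(n,k)=\frac1k\binom{n-1}{k-1}\binom{n+k}{k-1}$. *)

From mathcomp Require Import all_boot all_order all_algebra.
Set Implicit Arguments. Unset Strict Implicit. Unset Printing Implicit Defensive.
Import Order.TTheory GRing.Theory Num.Theory.
Local Open Scope ring_scope.

Definition narayana (n k : nat) : rat :=
  (n%:R)^-1 * ('C(n, k))%:R * ('C(n, k.-1))%:R.

Definition wnum (n k : nat) : rat :=
  (k%:R)^-1 * ('C(n.-1, k.-1))%:R * ('C(n + k, k.-1))%:R.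

From mathcomp Require Import all_boot all_order all_algebra.
Import Order.TTheory GRing.Theory Num.Theory.

(* Trinomial revision C(n-j,k-j) C(n,j) = C(n,k) C(k,j) turns the first sum
   into C(n,k)/n times a Vandermonde convolution, equal to C(n,k) C(n+k,k-1)/n,
   and absorption k C(n,k) = n C(n-1,k-1) puts w(n,k) in the same form.  The
   second identity inverts the first: after trinomial revision, the product of
   the triangular kernels C(n-j,k-j) and (-1)^(k-j) C(n-j,k-j) collapses to the
   alternating sum (1-1)^(k-i). *)

Lemma ffactnD n j m : n ^_ (j + m) = n ^_ j * (n - j) ^_ m.
Proof.
elim: m => [|m IHm]; first by rewrite addn0 ffactn0 muln1.
by rewrite addnS !ffactnSr IHm subnDA mulnA.
Qed.

Lemma bin_trinomial n k j : j <= k ->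
  'C(n - j, k - j) * 'C(n, j) = 'C(n, k) * 'C(k, j).
Proof.
move=> le_jk; have fact_pos : 0 < j`! * (k - j)`! by rewrite muln_gt0 !fact_gt0.
apply/eqP; rewrite -(eqn_pmul2r fact_pos) -[X in _ == X]mulnA bin_fact // bin_ffact.
by rewrite [j`! * _]mulnC mulnACA !bin_ffact mulnC -ffactnD subnKC.
Qed.

Lemma Vandermonde_pred n k : 0 < k ->
  \sum_(1 <= j < k.+1) 'C(k, j) * 'C(n, j.-1) = 'C(n + k, k.-1).
Proof.
case: k => // k _; rewrite big_add1 /= -binomial.Vandermonde big_mkord.
by apply: eq_bigr => i _; rewrite mulnC -(bin_sub (ltn_ord i)) subSS.
Qed.

Lemma sum_bin_sub_narayana_nat n k : 0 < k ->
  \sum_(1 <= j < k.+1) 'C(n - j, k - j) * ('C(n, j) * 'C(n, j.-1))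
    = 'C(n, k) * 'C(n + k, k.-1).
Proof.
move=> k_gt0; rewrite -Vandermonde_pred // big_distrr /=.
by apply: eq_big_nat => j /andP[_ le_jk]; rewrite mulnA bin_trinomial // mulnA.
Qed.

Local Open Scope ring_scope.

Lemma narayanaE n k : narayana n k = n%:R^-1 * ('C(n, k) * 'C(n, k.-1))%:R.
Proof. by rewrite /narayana natrM mulrA. Qed.

Lemma wnumE n k : (0 < n)%N -> (0 < k)%N ->
  wnum n k = n%:R^-1 * ('C(n, k) * 'C(n + k, k.-1))%:R.
Proof.
move=> n_gt0 k_gt0; have absorb := mul_bin_diag n k.-1; rewrite prednK // in absorb.
have nz_n : n%:R != 0 :> rat by rewrite pnatr_eq0 -lt0n.
have nz_k : k%:R != 0 :> rat by rewrite pnatr_eq0 -lt0n.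
rewrite /wnum natrM mulrA; congr (_ * _).
rewrite -[X in k%:R^-1 * X](mulKf nz_n) -natrM absorb natrM mulrCA mulKf //.
Qed.

Lemma wnum_sum_narayana n k : (0 < n)%N -> (0 < k)%N ->
  wnum n k = \sum_(1 <= j < k.+1) 'C(n - j, k - j)%:R * narayana n j.
Proof.
move=> n_gt0 k_gt0; rewrite wnumE // -sum_bin_sub_narayana_nat // natr_sum mulr_sumr.
by apply: eq_bigr => j _; rewrite narayanaE mulrCA natrM.
Qed.

Lemma sum_sign_bin (R : pzRingType) m :
  \sum_(t < m.+1) (-1) ^+ (m - t) *+ 'C(m, t) = (m == 0)%:R :> R.
Proof.
have := exprDn_comm m (commr1 (-1 : R)); rewrite addNr expr0n => ->.
by apply: eq_bigr => t _; rewrite expr1n mulr1.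
Qed.

Lemma sum_bin_sub_sign_bin (R : pzRingType) n i k :
  \sum_(i <= j < k.+1) 'C(n - j, k - j)%:R * (-1) ^+ (k - j) * 'C(n - i, j - i)%:R
    = (i == k)%:R :> R.
Proof.
have [le_ik | lt_ki] := leqP i k; last by rewrite big_geq ?(gtn_eqF lt_ki).
rewrite -{1}(add0n i) big_addn subSn // big_mkord.
transitivity ('C(n - i, k - i)%:R *
              \sum_(t < (k - i).+1) (-1) ^+ (k - i - t) *+ 'C(k - i, t) : R).
  rewrite mulr_sumr; apply: eq_bigr => t _.
  have le_t : (t <= k - i)%N := ltnSE (ltn_ord t).
  rewrite addnK [(t + i)%N]addnC !subnDA -mulrA (commr_nat _ 'C(n - i, t)) mulrA.
  by rewrite -natrM bin_trinomial // natrM -mulrA (mulr_natl _ 'C(k - i, t)).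
rewrite sum_sign_bin [i == k]eqn_leq le_ik -subn_eq0.
by have [-> | _] := eqVneq (k - i)%N 0%N; rewrite ?bin0 ?mulr1 ?mulr0.
Qed.

Lemma bin_sub_inversion (R : pzRingType) n m k (f g : nat -> R) : (m <= k)%N ->
  (forall j, (m <= j <= k)%N -> g j = \sum_(m <= i < j.+1) 'C(n - i, j - i)%:R * f i) ->
  f k = \sum_(m <= j < k.+1) 'C(n - j, k - j)%:R * (-1) ^+ (k - j) * g j.
Proof.
move=> le_mk gE.
transitivity (\sum_(m <= i < k.+1) (i == k)%:R * f i).
  rewrite big_nat_recr //= eqxx mul1r big_nat_cond big1 ?add0r // => i.
  by case/andP=> /andP[_ lt_ik] _; rewrite ltn_eqF ?mul0r.
under [RHS]eq_big_nat => j /andP[le_mj lt_jk].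
  rewrite gE ?le_mj // mulr_sumr (big_nat_widen _ _ _ _ _ lt_jk).
over.
rewrite (exchange_big_dep_nat predT) //=; apply: eq_big_nat => i /andP[le_mi _].
rewrite -(big_nat_widenl _ _ _ predT _ le_mi) -(sum_bin_sub_sign_bin _ n) mulr_suml.
by apply: eq_bigr => j _; rewrite !mulrA.
Qed.

Theorem lemma4p4 (n k : nat) (hk : (1 <= k)%N) (hkn : (k <= n)%N) :
  wnum n k = \sum_(1 <= j < k.+1) ('C(n - j, k - j))%:R * narayana n j
  /\
  narayana n k =
    \sum_(1 <= j < k.+1) ('C(n - j, k - j))%:R * (-1) ^+ (k - j) * wnum n j.
Proof.
have n_gt0 : (0 < n)%N := leq_trans hk hkn.
split; first exact: wnum_sum_narayana.
apply: bin_sub_inversion => // j /andP[j_gt0 _].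
exact: wnum_sum_narayana j_gt0.
Qed.
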